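(* Let $2\le p\le n$, $\beta_1\neq0$, $z_1,\dots,z_p\in\mathbb R$, and for $\lambda\ge0$ let $$L_p(\lambda)=\frac1n\Big(\beta_1-\operatorname{sgn}(z_1)(|z_1|-\lambda)_+\Big)^2+\frac1n\sum_{j=2}^p\big((|z_j|-\lambda)_+\big)^2,\quad L_1(\lambda)=\frac1n\Big(\beta_1-\operatorname{sgn}(z_1)(|z_1|-\lambda)_+\Big)^2,$$ with $L_p(\lambda_p^* )=\min_{\lambda\ge0}L_p(\lambda)$ and $L_1(\lambda_1^* )=\min_{\lambda\ge0}L_1(\lambda)$. Assume $\operatorname{sgn}(\beta_1)=\operatorname{sgn}(z_1)$ and $\max_{2\le j\le p}|z_j|>|z_1|$. Then $L_p(\lambda_p^* )>L_1(\lambda_1^* )$.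
   Context: $(a)_+=\max(a,0)$; $\operatorname{sgn}$ is the sign function. In the paper's setting $\mathbf z=\mathbf X^T\mathbf y$ for an orthonormal design with $\mathbf y=\mathbf X\boldsymbol\beta_0+\boldsymbol\varepsilon$, $\boldsymbol\beta_0=(\beta_1,0,\dots,0)^T$; $L_p$ and $L_1$ are the Lasso losses using all $p$ predictors and only the true predictor, respectively. *)

From Stdlib Require Import Reals Lra.
Open Scope R_scope.

Definition sgn (x : R) : R :=
  if Rlt_dec 0 x then 1 else if Rlt_dec x 0 then -1 else 0.

Definition pos_part (a : R) : R := Rmax a 0.

Definition L1 (n : nat) (beta1 : R) (z : nat -> R) (lam : R) : R :=
  / INR n * (beta1 - sgn (z 1%nat) * pos_part (Rabs (z 1%nat) - lam)) ^ 2.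

Definition Lp (n p : nat) (beta1 : R) (z : nat -> R) (lam : R) : R :=
  L1 n beta1 z lam
  + / INR n * sum_f 2 p (fun j => (pos_part (Rabs (z j) - lam)) ^ 2).

(* If the optimal lambda for L_p still leaves some noise coordinate z_j active,
   L_p pays a positive price for it on top of L_1.  Otherwise lambda >= |z_j| > |z_1|
   kills the signal coordinate too, so L_p is at least beta_1^2 / n, while L_1 can do
   strictly better: since z_1 has the sign of beta_1, shrinking z_1 by a small amount
   (instead of to 0) moves the estimate towards beta_1. *)

From Stdlib Require Import Reals Lra Lia.
Open Scope R_scope.

Lemma sum_f_R0_ge_term (f : nat -> R) (N k : nat) :
  (forall i, 0 <= f i) -> (k <= N)%nat -> f k <= sum_f_R0 f N.
Proof.
  intros Hf. induction N as [|N IH]; intros Hk; simpl.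
  - replace k with 0%nat by lia. lra.
  - destruct (Nat.eq_dec k (S N)) as [->|Hne].
    + assert (0 <= sum_f_R0 f N) by (apply cond_pos_sum; exact Hf). lra.
    + assert (f k <= sum_f_R0 f N) by (apply IH; lia).
      specialize (Hf (S N)). lra.
Qed.

Lemma sum_f_ge_term (f : nat -> R) (s N k : nat) :
  (forall i, 0 <= f i) -> (s <= k <= N)%nat -> f k <= sum_f s N f.
Proof.
  intros Hf Hk. unfold sum_f.
  replace (f k) with (f (k - s + s)%nat) by (f_equal; lia).
  apply (sum_f_R0_ge_term (fun i => f (i + s)%nat)); [intros; apply Hf | lia].
Qed.

Lemma sgn_eq0 (x : R) : sgn x = 0 -> x = 0.
Proof.
  unfold sgn. destruct (Rlt_dec 0 x); [lra|]. destruct (Rlt_dec x 0); lra.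
Qed.

Lemma sgn_mul_self (x : R) : x <> 0 -> sgn x * sgn x = 1.
Proof.
  intros Hx. unfold sgn.
  destruct (Rlt_dec 0 x); [lra|]. destruct (Rlt_dec x 0); lra.
Qed.

Lemma sgn_mul_id (x : R) : sgn x * x = Rabs x.
Proof.
  unfold sgn. destruct (Rlt_dec 0 x).
  - rewrite Rabs_right by lra. ring.
  - destruct (Rlt_dec x 0).
    + rewrite Rabs_left by lra. ring.
    + replace x with 0 by lra. rewrite Rabs_R0. ring.
Qed.

Lemma sqr_sub_sgn_lt (b m : R) : 0 < m < 2 * Rabs b -> (b - sgn b * m) ^ 2 < b ^ 2.
Proof.
  intros Hm.
  assert (Hb : b <> 0) by (intros ->; rewrite Rabs_R0 in Hm; lra).
  replace ((b - sgn b * m) ^ 2)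
    with (b ^ 2 - 2 * m * (sgn b * b) + (sgn b * sgn b) * m ^ 2) by ring.
  rewrite sgn_mul_id, sgn_mul_self by exact Hb. nra.
Qed.

Lemma pos_part_of_nonpos (a : R) : a <= 0 -> pos_part a = 0.
Proof. intros Ha. apply Rmax_right. exact Ha. Qed.

Lemma pos_part_of_nonneg (a : R) : 0 <= a -> pos_part a = a.
Proof. intros Ha. apply Rmax_left. exact Ha. Qed.

Section LassoLosses.

Variables (n : nat) (beta1 : R) (z : nat -> R).
Hypothesis n_pos : (0 < n)%nat.

Let invn_pos : 0 < / INR n.
Proof. apply Rinv_0_lt_compat, lt_0_INR, n_pos. Qed.

Lemma L1_ge_abs (lam : R) :
  Rabs (z 1%nat) <= lam -> L1 n beta1 z lam = / INR n * beta1 ^ 2.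
Proof.
  intros Hlam. unfold L1. rewrite pos_part_of_nonpos by lra. f_equal. ring.
Qed.

Lemma L1_lt_no_fit :
  beta1 <> 0 -> sgn beta1 = sgn (z 1%nat) ->
  exists lam, 0 <= lam /\ L1 n beta1 z lam < / INR n * beta1 ^ 2.
Proof.
  intros Hb Hsg.
  set (a := Rabs (z 1%nat)).
  assert (Ha : 0 < a).
  { apply Rabs_pos_lt. intros Hz. apply Hb, sgn_eq0. rewrite Hsg, Hz.
    unfold sgn. destruct (Rlt_dec 0 0); [lra|]. destruct (Rlt_dec 0 0); lra. }
  assert (Hbp : 0 < Rabs beta1) by (apply Rabs_pos_lt; exact Hb).
  set (m := Rmin a (Rabs beta1)).
  assert (Hm : 0 < m <= a /\ m <= Rabs beta1).
  { unfold m. repeat split; [apply Rmin_glb_lt; lra | apply Rmin_l | apply Rmin_r]. }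
  exists (a - m). split; [lra|].
  unfold L1. fold a. rewrite <- Hsg.
  replace (a - (a - m)) with m by ring. rewrite pos_part_of_nonneg by lra.
  apply Rmult_lt_compat_l; [exact invn_pos|].
  apply sqr_sub_sgn_lt. lra.
Qed.

Lemma L1_min_lt_ge_abs (lam1 lam : R) :
  beta1 <> 0 -> sgn beta1 = sgn (z 1%nat) ->
  (forall l, 0 <= l -> L1 n beta1 z lam1 <= L1 n beta1 z l) ->
  Rabs (z 1%nat) <= lam -> L1 n beta1 z lam1 < L1 n beta1 z lam.
Proof.
  intros Hb Hsg Hmin Hlam. rewrite (L1_ge_abs lam Hlam).
  destruct (L1_lt_no_fit Hb Hsg) as [l [Hl Hlt]].
  specialize (Hmin l Hl). lra.
Qed.

Lemma Lp_ge_L1 (p : nat) (lam : R) : L1 n beta1 z lam <= Lp n p beta1 z lam.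
Proof.
  unfold Lp.
  assert (0 <= sum_f 2 p (fun j => pos_part (Rabs (z j) - lam) ^ 2)).
  { unfold sum_f. apply cond_pos_sum. intros. apply pow2_ge_0. }
  assert (0 <= / INR n * sum_f 2 p (fun j => pos_part (Rabs (z j) - lam) ^ 2))
    by (apply Rmult_le_pos; lra).
  lra.
Qed.

Lemma Lp_gt_L1 (p j : nat) (lam : R) :
  (2 <= j <= p)%nat -> lam < Rabs (z j) -> L1 n beta1 z lam < Lp n p beta1 z lam.
Proof.
  intros Hj Hlam. unfold Lp.
  assert (Hterm : (Rabs (z j) - lam) ^ 2
                  <= sum_f 2 p (fun j => pos_part (Rabs (z j) - lam) ^ 2)).
  { rewrite <- pos_part_of_nonneg with (a := Rabs (z j) - lam) by lra.
    apply (sum_f_ge_term (fun j => pos_part (Rabs (z j) - lam) ^ 2));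
      [intros; apply pow2_ge_0 | exact Hj]. }
  assert (0 < (Rabs (z j) - lam) ^ 2) by (apply pow_lt; lra).
  assert (0 < / INR n * sum_f 2 p (fun j => pos_part (Rabs (z j) - lam) ^ 2))
    by (apply Rmult_lt_0_compat; lra).
  lra.
Qed.

End LassoLosses.

Theorem lemma2p4 (n p : nat) (beta1 : R) (z : nat -> R) (lamp lam1 : R) :
  (2 <= p)%nat -> (p <= n)%nat -> beta1 <> 0 ->
  0 <= lamp -> (forall lam, 0 <= lam -> Lp n p beta1 z lamp <= Lp n p beta1 z lam) ->
  0 <= lam1 -> (forall lam, 0 <= lam -> L1 n beta1 z lam1 <= L1 n beta1 z lam) ->
  sgn beta1 = sgn (z 1%nat) ->
  (exists j, (2 <= j <= p)%nat /\ Rabs (z j) > Rabs (z 1%nat)) ->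
  Lp n p beta1 z lamp > L1 n beta1 z lam1.
Proof.
  intros Hp Hpn Hb Hlamp _ _ Hmin1 Hsg [j [Hj Hzj]].
  assert (Hn : (0 < n)%nat) by lia.
  destruct (Rlt_dec lamp (Rabs (z j))) as [Hactive|Hinactive].
  - pose proof (Lp_gt_L1 n beta1 z Hn p j lamp Hj Hactive).
    pose proof (Hmin1 lamp Hlamp). lra.
  - pose proof (Lp_ge_L1 n beta1 z Hn p lamp).
    assert (L1 n beta1 z lam1 < L1 n beta1 z lamp)
      by (apply (L1_min_lt_ge_abs n beta1 z Hn); [exact Hb | exact Hsg | exact Hmin1 | lra]).
    lra.
Qed.
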